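(* Let $\mathcal{H}=(V,E)$ be a hypergraph with no repeated hyperedge, $V=\{v_1,\dots,v_n\}$, of range $k_{\max}\geq 2$, and let $\mathcal{A}_{\mathcal{H}}$ be its layered e-adjacency tensor (defined in the context). Let $\Delta=\max_{1\le i\le n}\deg(v_i)$ and $\Delta^\star=\max_{1\le i\le k_{\max}-1}\deg(y_i)$. Then every eigenvalue $\lambda$ of $\mathcal{A}_{\mathcal{H}}$ satisfies $|\lambda|\le \max(\Delta,\Delta^\star)$.
   Context: A hypergraph $\mathcal{H}=(V,E)$ on $V=\{v_1,\dots,v_n\}$ is a family $E$ of nonempty subsets (hyperedges) of $V$; it has no repeated hyperedge if its hyperedges are pairwise distinct. The range is $k_{\max}=\max\{|e|:e\in E\}$, and $\deg(v_i)$ is the number of hyperedges containing $v_i$. Introduce new pairwise distinct vertices $y_1,\dots,y_{k_{\max}-1}\notin V$. The layered uniform hypergraph of $\mathcal{H}$ is the $k_{\max}$-uniform hypergraph on $V\cup\{y_1,\dots,y_{k_{\max}-1}\}$ with hyperedges $e\cup\{y_{|e|},\dots,y_{k_{\max}-1}\}$ for $e\in E$; $\deg(y_i)$ is the number of these hyperedges containing $y_i$. The layered e-adjacency tensor $\mathcal{A}_{\mathcal{H}}=(a_{i_1\dots i_{k_{\max}}})$ is the symmetric hypermatrix of order $k_{\max}$ and dimension $N=n+k_{\max}-1$ (index $i\le n$ for $v_i$, index $n+l$ for $y_l$) such that: for each $e=\{v_{i_1},\dots,v_{i_j}\}\in E$ with $i_1<\dots<i_j$, putting $i_l=n+l-1$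 for $l\in\{j+1,\dots,k_{\max}\}$, every entry whose index tuple is a permutation of $(i_1,\dots,i_{k_{\max}})$ equals $\frac{1}{(k_{\max}-1)!}$; all other entries are $0$. Eigenvalues (in the sense of Qi): for a hypermatrix $\mathcal{A}=(a_{i_1\dots i_m})$ of order $m$ and dimension $N$, $\lambda\in\mathbb{C}$ is an eigenvalue if there exists a nonzero $x\in\mathbb{C}^N$ with $\sum_{i_2,\dots,i_m=1}^{N} a_{i i_2\dots i_m}x_{i_2}\cdots x_{i_m}=\lambda x_i^{m-1}$ for all $i\in\{1,\dots,N\}$. *)

From mathcomp Require Import all_boot all_order all_algebra.
Set Implicit Arguments. Unset Strict Implicit. Unset Printing Implicit Defensive.
Import Order.TTheory GRing.Theory Num.Theory.
Local Open Scope ring_scope.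

(* A hypergraph on V = {v_1,...,v_n} (vertex v_(i+1) is the ordinal i : 'I_n)
   is a set E of subsets of 'I_n; being a set, it has no repeated hyperedge. *)

Definition kmax (n : nat) (E : {set {set 'I_n}}) : nat := \max_(e in E) #|e|.

Definition hdeg (n : nat) (E : {set {set 'I_n}}) (v : 'I_n) : nat :=
  #|[set e in E | v \in e]|.

(* Layered uniform hypergraph, for k_max = m.+2 (order k = m.+2),
   dimension N = n + (k-1) = n + m.+1.  Vertex v_(i+1) has index lshift i,
   vertex y_(l+1) (l : 'I_m.+1) has index rshift n l = n + l.
   The layered edge of e is e ∪ {y_|e|, ..., y_(k-1)}. *)
Definition layered_edge (n m : nat) (e : {set 'I_n}) : {set 'I_(n + m.+1)} :=
  [set lshift m.+1 v | v in e] :|: [set rshift n l | l : 'I_m.+1 & #|e| <= l.+1]%N.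

Definition ldeg (n m : nat) (E : {set {set 'I_n}}) (w : 'I_(n + m.+1)) : nat :=
  #|[set e in E | w \in layered_edge m e]|.

Definition layered_tensor (C : fieldType) (n m : nat) (E : {set {set 'I_n}})
    (t : {ffun 'I_m.+2 -> 'I_(n + m.+1)}) : C :=
  if [exists e in E, perm_eq (codom t) (enum (layered_edge m e))]
  then ((m.+1)`!%:R)^-1 else 0.

Definition tensor_eigenvalue (C : fieldType) (m N : nat)
    (A : {ffun 'I_m.+1 -> 'I_N} -> C) (lambda : C) : Prop :=
  exists x : 'I_N -> C, (exists i, x i != 0) /\
    forall i : 'I_N,
      \sum_(t : {ffun 'I_m.+1 -> 'I_N} | t ord0 == i)
          A t * \prod_(j : 'I_m.+1 | j != ord0) x (t j)
      = lambda * x i ^+ m.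

(* Gershgorin's argument for tensors: evaluating the eigen-equation at a
   coordinate i where |x_i| is maximal gives |lambda| |x_i|^m <= (sum of the
   norms of the entries in row i) |x_i|^m.  In row i of the layered tensor,
   each layered edge through the vertex of index i contributes its (k-1)!
   orderings with first index i, each carrying the entry 1/(k-1)!, so the
   row sum is the degree of that vertex in the layered hypergraph; the degree
   of a layered copy of v_j is deg(v_j). *)
From mathcomp Require Import all_boot all_order all_algebra.
Import Order.TTheory GRing.Theory Num.Theory.

Lemma card_perm_tuples_head (T : finType) (k : nat) (S : {set T}) (i : T) :
  #|[set t : {ffun 'I_k.+1 -> T} | (t ord0 == i) && perm_eq (codom t) (enum S)]|
    <= k`! * (i \in S).
Proof.
set P := [set t | _].
have [-> | [t0 t0P]] := set_0Vmem P; first by rewrite cards0.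
have t_inj t : t \in P -> injective t.
  rewrite inE => /andP[_ tS]; apply/injectiveP.
  by rewrite /injectiveb /dinjectiveb -/(codom t) (perm_uniq tS) enum_uniq.
have t_in_S t : t \in P -> forall j, t j \in S.
  by rewrite inE => /andP[_ tS] j; rewrite -mem_enum -(perm_mem tS) codom_f.
have t_head t : t \in P -> t ord0 = i by rewrite inE => /andP[/eqP].
have iS : i \in S by rewrite -(t_head t0) ?t_in_S.
have cardS : #|S| = k.+1.
  move: t0P; rewrite inE => /andP[_ /perm_size].
  by rewrite size_codom card_ord -cardE.
have cardSi : #|S :\ i| = k by apply/eqP; rewrite -eqSS -cardS (cardsD1 i S) iS.
pose tail (t : {ffun 'I_k.+1 -> T}) := [ffun j : 'I_k => t (lift ord0 j)].
have tail_inj : {in P &, injective tail}.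
  move=> t1 t2 t1P t2P /ffunP eq12; apply/ffunP => j.
  case: (unliftP ord0 j) => [j' -> | ->]; last by rewrite !t_head.
  by have := eq12 j'; rewrite !ffunE.
rewrite iS muln1 -(card_in_imset tail_inj) -ffactnn.
rewrite -[X in X ^_ _]cardSi -[X in _ ^_ X]card_ord -card_inj_ffuns_on.
apply: subset_leq_card; apply/subsetP => _ /imsetP[t tP ->]; rewrite inE.
apply/andP; split; last first.
  by apply/injectiveP => j1 j2; rewrite !ffunE => /(t_inj t tP)/lift_inj.
apply/ffun_onP => j; rewrite ffunE !inE t_in_S // andbT -(t_head t tP).
by rewrite (inj_eq (t_inj t tP)) eq_sym neq_lift.
Qed.

Local Open Scope ring_scope.

Lemma tensor_eigenvalue_norm_le (C : numFieldType) (m N : nat)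
    (A : {ffun 'I_m.+1 -> 'I_N} -> C) (lambda r : C) :
  (forall i, \sum_(t : {ffun 'I_m.+1 -> 'I_N} | t ord0 == i) `|A t| <= r) ->
  tensor_eigenvalue A lambda -> `|lambda| <= r.
Proof.
move=> row_le [x [[i0 x_i0] eig]].
have [i _ x_max] := @real_arg_maxP _ _ i0 xpredT (fun j => `|x j|) isT
  (fun j _ => normr_real (x j)).
set M := `|x i| in x_max.
have x_le j : `|x j| <= M := x_max j isT.
have M_gt0 : 0 < M by apply: lt_le_trans (x_le i0); rewrite normr_gt0.
have prod_le (t : {ffun 'I_m.+1 -> 'I_N}) :
    `|\prod_(j : 'I_m.+1 | j != ord0) x (t j)| <= M ^+ m.
  rewrite normr_prod; apply: (@le_trans _ _ (\prod_(j : 'I_m.+1 | j != ord0) M)).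
    by apply: ler_prod => j _; rewrite normr_ge0 x_le.
  by rewrite (eq_bigl (fun j => j \in predC1 ord0)) // prodr_const cardC1 card_ord.
rewrite -(ler_pM2r (exprn_gt0 m M_gt0)) -normrX -normrM -eig normrX.
apply: le_trans (ler_norm_sum _ _ _) _.
apply: (@le_trans _ _
  (\sum_(t : {ffun 'I_m.+1 -> 'I_N} | t ord0 == i) `|A t| * M ^+ m)).
  by apply: ler_sum => t _; rewrite normrM ler_wpM2l ?prod_le.
by rewrite -mulr_suml ler_wpM2r ?row_le // exprn_ge0 ?ltW.
Qed.

Lemma sum_norm_layered_tensor_row (C : numFieldType) (n m : nat)
    (E : {set {set 'I_n}}) (i : 'I_(n + m.+1)) :
  \sum_(t : {ffun 'I_m.+2 -> 'I_(n + m.+1)} | t ord0 == i)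
      `|@layered_tensor C n m E t| <= (ldeg E i)%:R.
Proof.
set c : C := ((m.+1)`!%:R)^-1.
have c_ge0 : 0 <= c by rewrite invr_ge0 ler0n.
pose matches (t : {ffun 'I_m.+2 -> 'I_(n + m.+1)}) (e : {set 'I_n}) : nat :=
  perm_eq (codom t) (enum (layered_edge m e)).
have entry_le t :
    `|@layered_tensor C n m E t| <= c * (\sum_(e in E) matches t e)%:R.
  rewrite /layered_tensor; case: existsP => [[e /andP[eE te]] | _]; last first.
    by rewrite normr0 mulr_ge0.
  rewrite -/c ger0_norm // -[X in X <= _]mulr1 ler_wpM2l // ler1n.
  by rewrite (bigD1 e) //= /matches te add1n.
have edge_count e :
    (\sum_(t : {ffun 'I_m.+2 -> 'I_(n + m.+1)} | t ord0 == i) matches t e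
      <= (m.+1)`! * (i \in layered_edge m e))%N.
  apply: leq_trans _ (card_perm_tuples_head _ _ (layered_edge m e) i).
  rewrite -sum1_card big_mkcond [X in (_ <= X)%N]big_mkcond /=.
  apply/eq_leq/eq_bigr => t _; rewrite inE /matches.
  by case: (t ord0 == i); case: perm_eq.
apply: le_trans (ler_sum _ (fun t _ => entry_le t)) _.
rewrite -mulr_sumr -natr_sum exchange_big /=.
apply: (@le_trans _ _ (c * ((m.+1)`! * \sum_(e in E) (i \in layered_edge m e))%N%:R)).
  by rewrite ler_wpM2l // ler_nat big_distrr leq_sum.
rewrite natrM mulrA mulVf ?pnatr_eq0 -?lt0n ?fact_gt0 // mul1r ler_nat.
rewrite /ldeg -sum1_card big_mkcond [X in (_ <= X)%N]big_mkcond /=.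
by apply/eq_leq/eq_bigr => e _; rewrite [in RHS]inE; case: (e \in E); case: (i \in _).
Qed.

Lemma mem_layered_edge_lshift (n m : nat) (e : {set 'I_n}) (v : 'I_n) :
  (lshift m.+1 v \in layered_edge m e) = (v \in e).
Proof.
rewrite in_setU mem_imset; last exact: lshift_inj.
case: imsetP => [[l _ /(congr1 val) /= v_eq] | _]; last by rewrite orbF.
by have := ltn_ord v; rewrite v_eq ltnNge leq_addr.
Qed.

Lemma ldeg_lshift (n m : nat) (E : {set {set 'I_n}}) (v : 'I_n) :
  ldeg E (lshift m.+1 v) = hdeg E v.
Proof.
by apply: eq_card => e; rewrite [LHS]in_set [RHS]in_set mem_layered_edge_lshift.
Qed.

Lemma ldeg_le_max_deg (n m : nat) (E : {set {set 'I_n}}) (i : 'I_(n + m.+1)) :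
  (ldeg E i <= maxn (\max_(v : 'I_n) hdeg E v)
                    (\max_(l : 'I_m.+1) ldeg E (rshift n l)))%N.
Proof.
rewrite -(splitK i); case: (split i) => [v | l] /=.
  by rewrite ldeg_lshift; apply: leq_trans (leq_maxl _ _); apply: (leq_bigmax v).
by apply: leq_trans (leq_maxr _ _); apply: (leq_bigmax l).
Qed.

Theorem mainTheorem2 (C : numClosedFieldType) (n m : nat)
    (E : {set {set 'I_n}})
    (hE : forall e, e \in E -> e != set0)
    (hk : kmax E = m.+2)
    (lambda : C) :
  tensor_eigenvalue (@layered_tensor C n m E) lambda ->
  `|lambda| <= (maxn (\max_(i : 'I_n) hdeg E i)
                     (\max_(l : 'I_m.+1) ldeg E (rshift n l)))%:R.
Proof.
apply: tensor_eigenvalue_norm_le => i.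
apply: le_trans (sum_norm_layered_tensor_row _ _ _ E i) _.
by rewrite ler_nat ldeg_le_max_deg.
Qed.
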